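(* Let $G$ be a $3$-connected $\Delta$-regular graph. If $\alpha$ and $\beta$ are unfrozen $(\Delta+1)$-colourings of $G$, then $\alpha\sim\beta$.
   Context: A $(\Delta+1)$-colouring is an $L$-colouring for the list-assignment $L(v)=\{1,\ldots,\Delta+1\}$ for all $v$, i.e. a proper colouring with colours in $\{1,\ldots,\Delta+1\}$. A vertex $v$ is frozen under a colouring $\varphi$ if every colour of $L(v)\setminus\{\varphi(v)\}$ appears on a neighbour of $v$; a colouring is unfrozen if at least one vertex is not frozen. $\alpha\sim\beta$ means $\alpha$ can be transformed into $\beta$ by a sequence of single-vertex recolouring steps, each keeping the colouring a proper $(\Delta+1)$-colouring. *)

From mathcomp Require Import all_boot.
Set Implicit Arguments. Unset Strict Implicit. Unset Printing Implicit Defensive.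

Definition simple_graph (T : finType) (e : rel T) : Prop :=
  symmetric e /\ irreflexive e.

Definition degree (T : finType) (e : rel T) (v : T) : nat := #|[set w | e v w]|.

Definition regular (T : finType) (e : rel T) (D : nat) : Prop :=
  forall v : T, degree e v = D.

Definition del_rel (T : finType) (e : rel T) (S : {set T}) : rel T :=
  fun u v => [&& e u v, u \notin S & v \notin S].

Definition k_connected (T : finType) (e : rel T) (k : nat) : Prop :=
  k < #|T| /\
  forall S : {set T}, #|S| < k ->
    forall x y : T, x \notin S -> y \notin S -> connect (del_rel e S) x y.

Definition proper_colouring (T : finType) (e : rel T) (D : nat) (c : {ffun T -> 'I_D.+1}) : bool :=
  [forall u, forall v, e u v ==> (c u != c v)].

(* Lists L(v) are all of 'I_D.+1; v frozen if every other colour appears on a neighbour. *)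
Definition frozen_at (T : finType) (e : rel T) (D : nat) (c : {ffun T -> 'I_D.+1}) (v : T) : bool :=
  [forall a : 'I_D.+1, (a != c v) ==> [exists w, e v w && (c w == a)]].

Definition unfrozen (T : finType) (e : rel T) (D : nat) (c : {ffun T -> 'I_D.+1}) : bool :=
  [exists v, ~~ frozen_at e c v].

Definition recolour_step (T : finType) (e : rel T) (D : nat) : rel {ffun T -> 'I_D.+1} :=
  fun a b => [&& proper_colouring e a, proper_colouring e b & #|[set v | a v != b v]| == 1].

Definition reconf (T : finType) (e : rel T) (D : nat) (a b : {ffun T -> 'I_D.+1}) : bool :=
  connect (@recolour_step T e D) a b.

From mathcomp Require Import all_boot zify.
Set Implicit Arguments. Unset Strict Implicit. Unset Printing Implicit Defensive.

(* An unfrozen vertex r misses a colour other than its own, so two of its D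
   neighbours x, y share a colour and, the colouring being proper, are not
   adjacent: every unfrozen colouring is monochromatic on a "cherry" x - r - y.
   As G - {x, y} is connected, its vertices can be deleted one at a time, r
   first, each having at that moment fewer than D neighbours among x, y and the
   vertices still present (for r, x and y count once as they share a colour).
   Colouring in the reverse order, every vertex always has two of the D + 1
   colours free.  This makes any two colourings that agree on x, y
   reconfigurable (a recolouring sequence of the earlier vertices lifts, moving
   the last vertex out of the way when needed), and it lets one greedily keep a
   chosen colour off the neighbours of x and y, after which x and y can be
   recoloured one by one.  So colourings monochromatic on a common cherry are
   reconfigurable.  Two cherries are linked through a colouring monochromatic
   on both, except when they share a vertex s and their other ends p, q are
   adjacent; then p is first moved off the colour of s and q onto it. *)

Section Recolouring.
Variables (T : finType) (e : rel T) (D : nat).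
Hypotheses (e_sym : symmetric e) (e_irr : irreflexive e).

Notation colouring := {ffun T -> 'I_D.+1}.

(** * Partial proper colourings and recolouring steps *)

Definition proper_on (S : {set T}) (c : colouring) :=
  [forall u in S, forall v in S, e u v ==> (c u != c v)].

Lemma proper_onP (S : {set T}) (c : colouring) :
  reflect (forall u v, u \in S -> v \in S -> e u v -> c u != c v) (proper_on S c).
Proof.
apply: (iffP forall_inP) => [pc u v uS vS | pc u uS].
  by move/forall_inP/(_ v vS)/implyP: (pc u uS).
by apply/forall_inP => v vS; apply/implyP; apply: pc.
Qed.

Lemma proper_onS (S S' : {set T}) (c : colouring) :
  S' \subset S -> proper_on S c -> proper_on S' c.
Proof.
by move=> /subsetP sS /proper_onP pc; apply/proper_onP => u v /sS uS /sS; apply: pc.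
Qed.

Lemma eq_proper_on (S : {set T}) (c c' : colouring) :
  {in S, c =1 c'} -> proper_on S c = proper_on S c'.
Proof.
move=> cc'; apply/proper_onP/proper_onP => pc u v uS vS /(pc u v uS vS);
  by rewrite ?cc' // -?cc'.
Qed.

Lemma proper_colouringE (c : colouring) : proper_colouring e c = proper_on setT c.
Proof.
apply/forallP/proper_onP => [pc u v _ _ | pc u]; first exact/implyP/(forallP (pc u)).
by apply/forallP => v; apply/implyP; apply: pc.
Qed.

Definition recolour (c : colouring) v d : colouring :=
  [ffun u => if u == v then d else c u].

Lemma recolour_at (c : colouring) v d : recolour c v d v = d.
Proof. by rewrite ffunE eqxx. Qed.

Lemma recolour_off (c : colouring) v d u : u != v -> recolour c v d u = c u.
Proof. by rewrite ffunE => /negbTE ->. Qed.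

Lemma eq_recolour (c c' : colouring) v :
  (forall u, u != v -> c u = c' u) -> c' = recolour c v (c' v).
Proof.
by move=> cc'; apply/ffunP => u; rewrite ffunE; case: eqVneq => [->|/cc' ->].
Qed.

Lemma recolour_id (c : colouring) v : recolour c v (c v) = c.
Proof. by rewrite -eq_recolour. Qed.

Lemma proper_on_recolour (S : {set T}) (c : colouring) v d : proper_on (S :\ v) c ->
  (v \in S -> forall u, u \in S -> e v u -> c u != d) -> proper_on S (recolour c v d).
Proof.
move=> /proper_onP pc nd; apply/proper_onP => u w uS wS euw.
have [uv | uv] := eqVneq u v; have [wv | wv] := eqVneq w v.
- by rewrite uv wv e_irr in euw.
- by rewrite uv recolour_at recolour_off // eq_sym nd -?uv.
- by rewrite wv recolour_at recolour_off // nd // -wv // e_sym.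
- by rewrite !recolour_off // pc // in_setD1 ?uv ?wv.
Qed.

Definition diff1 (a b : colouring) := #|[set v | a v != b v]| == 1.

Lemma diff1_recolour (c : colouring) v d : d != c v -> diff1 c (recolour c v d).
Proof.
move=> dv; apply/cards1P; exists v; apply/setP => u; rewrite !inE ffunE.
by case: (eqVneq u v) => [->|]; rewrite ?eqxx // eq_sym.
Qed.

Lemma diff1P (a b : colouring) :
  diff1 a b -> exists w d, d != a w /\ b = recolour a w d.
Proof.
case/cards1P => w ab_w; exists w, (b w); split.
  by have := set11 w; rewrite -ab_w inE eq_sym.
apply: eq_recolour => u uw; apply/eqP; apply: contraNT uw => abu.
by rewrite -in_set1 -ab_w inE.
Qed.

Definition agree_on (F : {set T}) (phi c : colouring) := [forall x in F, c x == phi x].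

Lemma agree_onP (F : {set T}) (phi c : colouring) :
  reflect {in F, c =1 phi} (agree_on F phi c).
Proof. by apply: (iffP forall_inP) => cF x xF; [exact/eqP/cF | rewrite cF]. Qed.

Lemma agree_on_off (F : {set T}) (phi a a' : colouring) v :
  v \notin F -> agree_on F phi a -> (forall u, u != v -> a' u = a u) -> agree_on F phi a'.
Proof.
move=> vF /agree_onP aF a'a; apply/agree_onP => u uF.
by rewrite a'a ?aF //; apply: contraNneq vF => <-.
Qed.

Definition recolour_step_on (S F : {set T}) (phi : colouring) : rel colouring :=
  fun a b => [&& proper_on S a, proper_on S b, agree_on F phi a, agree_on F phi b
              & diff1 a b].

Lemma recolour_step_onT (F : {set T}) (phi : colouring) :
  subrel (recolour_step_on setT F phi) (@recolour_step T e D).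
Proof.
by move=> a b /and5P [pa pb _ _ ab]; rewrite /recolour_step !proper_colouringE pa pb.
Qed.

Lemma reconf_trans (a b c : colouring) : reconf e a b -> reconf e b c -> reconf e a c.
Proof. exact: connect_trans. Qed.

Lemma proper_colouring_recolour (c : colouring) v d : proper_colouring e c ->
  (forall w, e v w -> c w != d) -> proper_colouring e (recolour c v d).
Proof.
rewrite !proper_colouringE => pc nd.
by apply: proper_on_recolour => [|_ w _ /nd //]; apply: proper_onS pc; apply: subsetT.
Qed.

Lemma reconf_recolour (c : colouring) v d : proper_colouring e c ->
  (forall w, e v w -> c w != d) -> reconf e c (recolour c v d).
Proof.
move=> pc nd; have [-> | dv] := eqVneq d (c v).
  by rewrite recolour_id; apply: connect0.
apply: connect1; rewrite /recolour_step pc proper_colouring_recolour //.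
exact: diff1_recolour.
Qed.

Lemma colour_notin (C : {set 'I_D.+1}) : #|C| <= D -> exists d, d \notin C.
Proof.
move=> leCD; have := cardsC C; rewrite card_ord => cardC.
have /card_gt0P [d] : 0 < #|~: C| by lia.
by rewrite inE; exists d.
Qed.

Definition nbrs_in (A : {set T}) v := [set w in A | e v w].

Lemma nbrs_inS (A B : {set T}) v : A \subset B -> nbrs_in A v \subset nbrs_in B v.
Proof.
by move=> /subsetP sAB; apply/subsetP => w; rewrite !inE => /andP [/sAB -> ->].
Qed.

Lemma card_nbr_colours (X : {set 'I_D.+1}) (F U : {set T}) (phi c : colouring) v :
  {in F, c =1 phi} ->
  #|X :|: c @: nbrs_in (F :|: U) v| <= #|X :|: phi @: nbrs_in F v| + #|nbrs_in U v|.
Proof.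
move=> cF.
have sub : X :|: c @: nbrs_in (F :|: U) v \subset
           (X :|: phi @: nbrs_in F v) :|: c @: nbrs_in U v.
  rewrite -setUA setUS //; apply/subsetP => z /imsetP [w].
  rewrite !inE => /andP [/orP [wF | wU] evw] ->; apply/orP.
    by left; rewrite cF //; apply: imset_f; rewrite inE wF evw.
  by right; apply: imset_f; rewrite inE wU evw.
apply: leq_trans (subset_leq_card sub) _; apply: leq_trans (leq_card_setU _ _) _.
by rewrite leq_add2l leq_imset_card.
Qed.

Lemma setUD1 (F U : {set T}) v : v \notin F -> (F :|: U) :\ v = F :|: U :\ v.
Proof.
move=> vF; apply/setP => w; rewrite !inE.
by case: (eqVneq w v) => [->|]; rewrite ?(negbTE vF).
Qed.

(** * Peeling orders *)

(* The vertex deleted first is the one coloured last. *)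
Inductive peelable (P : {set T} -> T -> Prop) : {set T} -> Prop :=
  | peelable0 : peelable P set0
  | peelableD1 (U : {set T}) v : v \in U -> P U v -> peelable P (U :\ v) -> peelable P U.

Lemma peelable_fam (P : {set T} -> T -> Prop) (fam : {set T} -> Prop) :
  (forall U, fam U -> U != set0 -> exists2 v, v \in U & P U v /\ fam (U :\ v)) ->
  forall U, fam U -> peelable P U.
Proof.
move=> peel U; move Hn: #|U| => n; elim: n U Hn => [|n IH] U Hn fU.
  by move/eqP: Hn; rewrite cards_eq0 => /eqP ->; apply: peelable0.
have U0 : U != set0 by rewrite -card_gt0 Hn.
have [v vU [Pv fUv]] := peel U fU U0.
apply: (peelableD1 vU Pv (IH _ _ fUv)).
by move: Hn; rewrite (cardsD1 v) vU => [[]].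
Qed.

Lemma peelable_any (P : {set T} -> T -> Prop) (U0 : {set T}) :
  (forall (U : {set T}) v, U \subset U0 -> v \in U -> P U v) -> peelable P U0.
Proof.
move=> HP; apply: (@peelable_fam P (fun U => U \subset U0)) => // U sU /set0Pn [v vU].
by exists v => //; split; [exact: HP | exact: subset_trans (subD1set U v) sU].
Qed.

Lemma connect_exit (E : rel T) (U : {set T}) r u :
  r \notin U -> u \in U -> connect E r u -> exists2 w, w \notin U & exists2 v, v \in U & E w v.
Proof.
move=> rU uU /connectP [p]; elim: p r rU => [|v p IH] r rU /=.
  by move=> _ ur; rewrite -ur uU in rU.
case/andP => Erv pth ul; have [vU | vU] := boolP (v \in U); first by exists r => //; exists v.
exact: IH vU pth ul.
Qed.

Lemma peelable_outer_nbr (P : {set T} -> T -> Prop) (F : {set T}) r : r \notin F ->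
  (forall u, u \notin F -> connect (del_rel e F) r u) ->
  (forall (U : {set T}) v w,
     U \subset ~: F -> v \in U -> e v w -> w \notin F :|: U -> P U v) ->
  forall U : {set T}, U \subset ~: F -> r \notin U -> peelable P U.
Proof.
move=> rF rconn HP U0 sU0 rU0.
apply: (@peelable_fam P (fun U => U \subset ~: F /\ r \notin U)) (conj sU0 rU0).
move=> U [sU rU] /set0Pn [u uU].
have uF : u \notin F by move/subsetP: sU => /(_ u uU); rewrite inE.
have [w wU [v vU /and3P [ewv wF vF]]] := connect_exit rU uU (rconn u uF).
exists v => //; split.
  by apply: (HP U v w) => //; [rewrite e_sym | rewrite inE negb_or wF].
by split; [exact: subset_trans (subD1set U v) sU | rewrite inE negb_and rU orbT].
Qed.

(** * Extending and reconfiguring colourings along a peeling order *)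

Lemma exists_extension_peelable (ban : T -> {set 'I_D.+1}) (F U : {set T})
    (phi : colouring) :
  proper_on F phi -> [disjoint F & U] ->
  peelable (fun U v => #|ban v :|: phi @: nbrs_in F v| + #|nbrs_in U v| <= D) U ->
  exists c, [/\ proper_on (F :|: U) c, {in F, c =1 phi}
              & {in U, forall u, c u \notin ban u}].
Proof.
move=> pphi dFU pU; elim: pU dFU => [|{}U v vU slack _ IH] dFU.
  by exists phi; rewrite setU0; split => // u; rewrite inE.
have vF : v \notin F by rewrite (disjointFl dFU vU).
have [c [pc cF cban]] := IH (disjointWr (subD1set U v) dFU).
have [d dC] : exists d, d \notin ban v :|: c @: nbrs_in (F :|: U :\ v) v.
  apply/colour_notin/(leq_trans (card_nbr_colours _ _ _ cF))/(leq_trans _ slack).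
  by rewrite leq_add2l subset_leq_card // nbrs_inS // subD1set.
exists (recolour c v d); split.
- apply: proper_on_recolour; first by rewrite setUD1.
  move=> _ u uFU evu; have uv : u != v by apply: contraTneq evu => ->; rewrite e_irr.
  apply: contraNneq dC => <-; rewrite inE imset_f ?orbT // inE -setUD1 // !inE uv.
  by move: uFU; rewrite inE => ->.
- by move=> u uF; rewrite recolour_off ?cF //; apply: contraNneq vF => <-.
- move=> u uU; have [-> | uv] := eqVneq u v; last by rewrite recolour_off // cban // !inE uv.
  by rewrite recolour_at; apply: contra dC; rewrite inE => ->.
Qed.

Lemma connect_agree_on (F : {set T}) (phi a b : colouring) :
  proper_on F a -> agree_on F phi a -> agree_on F phi b ->
  connect (recolour_step_on F F phi) a b.
Proof.
move Hn: #|[set v | a v != b v]| => n; elim: n a Hn => [|n IH] a Hn pa aF bF.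
  suff -> : a = b by exact: connect0.
  move/eqP: Hn; rewrite cards_eq0 => /eqP /setP ab; apply/ffunP => v.
  by move: (ab v); rewrite !inE => /negbFE /eqP.
have /card_gt0P [w] : 0 < #|[set v | a v != b v]| by rewrite Hn.
rewrite inE => abw.
have wF : w \notin F.
  by apply: contra abw => wF; rewrite (agree_onP _ _ _ aF) // (agree_onP _ _ _ bF).
pose a1 := recolour a w (b w).
have a1a u : u != w -> a1 u = a u by apply: recolour_off.
have pa1 : proper_on F a1.
  rewrite (@eq_proper_on F a1 a) // => u uF.
  by apply: a1a; apply: contraNneq wF => <-.
have a1F : agree_on F phi a1 := agree_on_off wF aF a1a.
apply: (connect_trans (connect1 _) (IH a1 _ pa1 a1F bF)).
  by rewrite /recolour_step_on pa pa1 aF a1F diff1_recolour // eq_sym.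
have -> : [set v | a1 v != b v] = [set v | a v != b v] :\ w.
  apply/setP => u; rewrite !inE.
  by have [->|uw] := eqVneq u w; [rewrite recolour_at eqxx | rewrite a1a].
by move: Hn; rewrite (cardsD1 w) inE abw => [[]].
Qed.

Section Lift.
Variables (F U : {set T}) (phi : colouring) (v : T).
Hypotheses (dFU : [disjoint F & U]) (vU : v \in U)
  (slack : #|phi @: nbrs_in F v| + #|nbrs_in U v| < D).

Let S := F :|: U.

Let vF : v \notin F. Proof. by rewrite (disjointFl dFU vU). Qed.

Lemma avoid_colour (a : colouring) d : proper_on S a -> agree_on F phi a ->
  exists a' : colouring, [/\ forall u, u != v -> a' u = a u, proper_on S a', a' v != d
               & connect (recolour_step_on S F phi) a a'].
Proof.
move=> pa aF; have [avd | avd] := eqVneq (a v) d; last by exists a.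
have [d' d'C] : exists d', d' \notin [set d] :|: a @: nbrs_in S v.
  apply/colour_notin/(leq_trans (card_nbr_colours _ _ _ (agree_onP _ _ _ aF))).
  by apply: leq_trans (leq_add (leq_card_setU _ _) (leqnn _)) _; rewrite cards1 -addnA.
have d'v : d' != a v by rewrite avd; apply: contra d'C; rewrite !inE => ->.
have a'a u : u != v -> recolour a v d' u = a u by apply: recolour_off.
have pa' : proper_on S (recolour a v d').
  apply: proper_on_recolour => [|_ u uS evu]; first exact: proper_onS (subD1set _ _) pa.
  by apply: contraNneq d'C => <-; rewrite inE imset_f ?orbT // inE uS evu.
exists (recolour a v d'); split => //; first by rewrite recolour_at -avd.
apply: connect1; rewrite /recolour_step_on pa pa' aF (agree_on_off vF aF a'a).
exact: diff1_recolour.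
Qed.

(* A step giving a neighbour of [v] the colour of [v] is preceded by moving [v] away. *)
Lemma lift_step (a b a' : colouring) : recolour_step_on (S :\ v) F phi a b ->
  (forall u, u != v -> a' u = a u) -> proper_on S a' ->
  exists b' : colouring, [/\ forall u, u != v -> b' u = b u, proper_on S b'
               & connect (recolour_step_on S F phi) a' b'].
Proof.
case/and5P => _ pb aF bF /diff1P [w [d [dw bE]]] a'a pa'; subst b.
have a'F := agree_on_off vF aF a'a.
have [wv | wv] := eqVneq w v.
  by exists a'; split => // u uv; rewrite recolour_off ?a'a // wv.
have [a'' [a''a' pa'' a''v conn]] := avoid_colour d pa' a'F.
have a''a u : u != v -> a'' u = a u by move=> uv; rewrite a''a' ?a'a.
have b'b u : u != v -> recolour a'' w d u = recolour a w d u.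
  by move=> uv; have [->|uw] := eqVneq u w; rewrite ?recolour_at ?recolour_off ?a''a.
have pb' : proper_on S (recolour a'' w d).
  apply: proper_on_recolour => [|wS u uS ewu]; first exact: proper_onS (subD1set _ _) pa''.
  have [-> //|uv] := eqVneq u v; rewrite a''a //.
  have uw : u != w by apply: contraTneq ewu => ->; rewrite e_irr.
  move/proper_onP: pb => /(_ u w); rewrite recolour_at recolour_off //; apply.
  - by rewrite in_setD1 uv uS.
  - by rewrite in_setD1 wv wS.
  - by rewrite e_sym.
exists (recolour a'' w d); split => //.
apply: (connect_trans conn); apply: connect1.
rewrite /recolour_step_on pa'' pb' (agree_on_off vF a'F a''a') (agree_on_off vF bF b'b).
by apply: diff1_recolour; rewrite a''a.
Qed.

Lemma lift_path (a b a' : colouring) : connect (recolour_step_on (S :\ v) F phi) a b ->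
  (forall u, u != v -> a' u = a u) -> proper_on S a' ->
  exists b' : colouring, [/\ forall u, u != v -> b' u = b u, proper_on S b'
               & connect (recolour_step_on S F phi) a' b'].
Proof.
case/connectP => p; elim: p a a' => [|a1 p IH] a a' /=.
  by move=> _ -> a'a pa'; exists a'.
case/andP => st pth bE a'a pa'.
have [a1' [a1'a1 pa1' conn1]] := lift_step st a'a pa'.
have [b' [b'b pb' conn2]] := IH a1 a1' pth bE a1'a1 pa1'.
by exists b'; split => //; apply: connect_trans conn1 conn2.
Qed.

End Lift.

Lemma connect_extension_peelable (F U : {set T}) (phi : colouring) :
  [disjoint F & U] ->
  peelable (fun U v => #|phi @: nbrs_in F v| + #|nbrs_in U v| < D) U ->
  forall a b, proper_on (F :|: U) a -> proper_on (F :|: U) b ->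
  agree_on F phi a -> agree_on F phi b -> connect (recolour_step_on (F :|: U) F phi) a b.
Proof.
move=> dFU pU; elim: pU dFU => [|{}U v vU slack _ IH] dFU a b pa pb aF bF.
  by rewrite setU0 in pa *; apply: connect_agree_on.
have vF : v \notin F by rewrite (disjointFl dFU vU).
have sub : F :|: U :\ v \subset F :|: U by rewrite setUS // subD1set.
have := IH (disjointWr (subD1set U v) dFU) a b (proper_onS sub pa) (proper_onS sub pb) aF bF.
rewrite -setUD1 // => /(lift_path dFU vU slack (a' := a)) /(_ (fun _ _ => erefl) pa).
case=> b' [b'b pb' conn]; apply: (connect_trans conn).
have [E | bv] := eqVneq (b' v) (b v).
  by rewrite (eq_recolour b'b) -E recolour_id connect0.
apply: connect1.
rewrite /recolour_step_on pb' pb (agree_on_off vF bF b'b) bF (eq_recolour b'b).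
by rewrite diff1_recolour // eq_sym.
Qed.

(** * Cherries in regular 3-connected graphs *)

Hypothesis e_reg : regular e D.

Lemma card_nbrs_in_le (A : {set T}) v : #|nbrs_in A v| <= D.
Proof.
rewrite -(e_reg v) /degree subset_leq_card //.
by apply/subsetP => w; rewrite !inE => /andP [].
Qed.

Lemma card_nbrs_in_lt (A : {set T}) v w : e v w -> w \notin A -> #|nbrs_in A v| < D.
Proof.
rewrite -(e_reg v) /degree => evw wA; apply: proper_card; apply/properP; split.
  by apply/subsetP => u; rewrite !inE => /andP [].
by exists w; rewrite !inE ?evw // (negbTE wA).
Qed.

Lemma card_nbrs_in_union (F U : {set T}) v : [disjoint F & U] ->
  #|nbrs_in (F :|: U) v| = #|nbrs_in F v| + #|nbrs_in U v|.
Proof.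
move=> dFU; rewrite -cardsUI.
have /eqP -> : nbrs_in F v :&: nbrs_in U v == set0.
  rewrite setI_eq0 (disjointWl _ (disjointWr _ dFU)) //;
    by apply/subsetP => w; rewrite inE => /andP [].
by rewrite cards0 addn0; apply: eq_card => w; rewrite !inE andb_orl.
Qed.

Lemma exists_extension (F : {set T}) (phi : colouring) : proper_on F phi ->
  exists c, proper_colouring e c /\ {in F, c =1 phi}.
Proof.
move=> pphi; have dF : [disjoint F & ~: F] by rewrite -subsets_disjoint.
have [|c [pc cF _]] := @exists_extension_peelable (fun _ => set0) F (~: F) phi pphi dF.
  apply: peelable_any => U v sU _; rewrite set0U.
  apply: leq_trans (leq_add (leq_imset_card _ _) (leqnn _)) _.
  by rewrite -card_nbrs_in_union ?card_nbrs_in_le //; apply: disjointWr sU dF.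
by exists c; rewrite proper_colouringE -(setUCr F).
Qed.

Hypothesis e_conn : k_connected e 3.

Definition cherry x y r := [&& x != y, ~~ e x y, e r x & e r y].

Lemma cherry_sym x y r : cherry x y r -> cherry y x r.
Proof. by case/and4P => xy nxy erx ery; rewrite /cherry eq_sym xy e_sym nxy erx ery. Qed.

Lemma cherry_indep x y r u w : cherry x y r ->
  u \in [set x; y] -> w \in [set x; y] -> ~~ e u w.
Proof.
case/and4P => _ nxy _ _ /set2P [] -> /set2P [] ->; rewrite ?e_irr // e_sym //.
Qed.

Section Cherry.
Variables (x y r : T).
Hypothesis xyr : cherry x y r.

Let F := [set x; y].

Lemma cherry_root_notin : r \notin F.
Proof.
case/and4P: xyr => _ _ erx ery; rewrite !inE; apply/norP.
by split; [apply: contraTneq erx | apply: contraTneq ery] => ->; rewrite e_irr.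
Qed.

Lemma cherry_nbr_notin w : e x w || e y w -> w \notin F.
Proof.
case/and4P: xyr => _ nxy _ _; rewrite !inE.
by case/orP => ew; apply/norP; split; apply: contraTneq ew => ->; rewrite ?e_irr // e_sym.
Qed.

Lemma nbrs_cherry_root : nbrs_in F r = F.
Proof.
case/and4P: xyr => _ _ erx ery; apply/setP => w; rewrite !inE.
by apply/andb_idr => /orP [] /eqP ->.
Qed.

Lemma card_nbrs_cherry_root : #|nbrs_in (~: F) r| + 2 <= D.
Proof.
have dF : [disjoint F & ~: F] by rewrite -subsets_disjoint.
case/and4P: xyr => xy _ _ _.
have := card_nbrs_in_le (F :|: ~: F) r.
by rewrite card_nbrs_in_union // nbrs_cherry_root cards2 xy addnC.
Qed.

Lemma cherry_connected u : u \notin F -> connect (del_rel e F) r u.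
Proof.
by apply: e_conn.2 cherry_root_notin; rewrite cards2; case: (x != y).
Qed.

Lemma peelable_cherry (P : {set T} -> T -> Prop) : P (~: F) r ->
  (forall (U : {set T}) v,
     U \subset ~: F -> #|nbrs_in F v| + #|nbrs_in U v| < D -> P U v) ->
  peelable P (~: F).
Proof.
move=> Pr HP; apply: peelableD1 (Pr) _; first by rewrite inE cherry_root_notin.
apply: (peelable_outer_nbr cherry_root_notin cherry_connected) => [U v w sU _ evw wFU||].
- apply: HP => //; rewrite -card_nbrs_in_union ?(card_nbrs_in_lt evw) //.
  by apply: disjointWr sU _; rewrite -subsets_disjoint.
- exact: subset_trans (subD1set _ _) _.
- by rewrite !inE eqxx.
Qed.

Lemma reconf_cherry_fixed (g d : colouring) :
  proper_colouring e g -> proper_colouring e d ->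
  g x = g y -> d x = g x -> d y = g y -> reconf e g d.
Proof.
move=> pg pd gxy dx dy; have dF : [disjoint F & ~: F] by rewrite -subsets_disjoint.
have pU : peelable (fun U v => #|g @: nbrs_in F v| + #|nbrs_in U v| < D) (~: F).
  apply: peelable_cherry => [|U v _]; last first.
    by apply: leq_ltn_trans; rewrite leq_add2r leq_imset_card.
  rewrite nbrs_cherry_root imsetU1 imset_set1 gxy setUid cards1.
  by have := card_nbrs_cherry_root; lia.
have := connect_extension_peelable dF pU (a := g) (b := d).
rewrite setUCr -!proper_colouringE => /(_ pg pd) conn.
apply: connect_sub (conn _ _); first by move=> a b /recolour_step_onT; apply: connect1.
  exact/agree_onP.
by apply/agree_onP => u /set2P [] ->.
Qed.

Lemma exists_cherry_colouring (a b : 'I_D.+1) (ban : T -> {set 'I_D.+1}) :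
  (forall v, ban v \subset [set a; b]) -> (forall v, b \in ban v -> e x v || e y v) ->
  exists c : colouring, [/\ proper_colouring e c, c x = a, c y = a
                          & forall u, u \notin F -> c u \notin ban u].
Proof.
move=> banab banb; pose phi : colouring := [ffun=> a].
have dF : [disjoint F & ~: F] by rewrite -subsets_disjoint.
have pphi : proper_on F phi.
  by apply/proper_onP => u w uF wF; rewrite (negbTE (cherry_indep xyr uF wF)).
have card_ab (X : {set 'I_D.+1}) : X \subset [set a; b] -> #|X| <= 2.
  by move/subset_leq_card/leq_trans; apply; rewrite cards2; case: (a != b).
have phiF (A : {set T}) : phi @: A \subset [set a].
  by apply/subsetP => _ /imsetP [w _ ->]; rewrite ffunE inE.
have [|c [pc cF cban]] := exists_extension_peelable pphi dF (ban := ban) (U := ~: F).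
  apply: peelable_cherry => [|U v _ slack].
    apply: leq_trans (leq_add (card_ab _ _) (leqnn _)) _.
      by rewrite subUset banab (subset_trans (phiF _)) // sub1set !inE eqxx.
    by rewrite addnC card_nbrs_cherry_root.
  suff : #|ban v :|: phi @: nbrs_in F v| <= #|nbrs_in F v| + 1 by lia.
  have [adj | nadj] := boolP (e x v || e y v).
    apply: leq_trans (card_ab _ _) _.
      by rewrite subUset banab (subset_trans (phiF _)) // sub1set !inE eqxx.
    rewrite addn1 ltnS card_gt0; apply/set0Pn.
    by case/orP: adj => [exv | eyv]; [exists x | exists y]; rewrite !inE eqxx ?orbT e_sym.
  have -> : nbrs_in F v = set0.
    apply/setP => w; rewrite !inE; apply/negbTE; move: nadj.
    by apply: contra => /andP [/orP [] /eqP -> evw]; rewrite !(e_sym _ v) evw ?orbT.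
  rewrite imset0 setU0 cards0 add0n -(cards1 a); apply: subset_leq_card.
  apply/subsetP => z zban; move/subsetP: (banab v) => /(_ z zban); rewrite !inE.
  by case/orP => // /eqP zb; move: nadj; rewrite -zb in banb; rewrite banb.
exists c; split.
- by rewrite proper_colouringE -(setUCr F).
- by rewrite cF ?ffunE // !inE eqxx.
- by rewrite cF ?ffunE // !inE eqxx orbT.
- by move=> u uF; apply: cban; rewrite inE.
Qed.

(* Keep [d x] off the neighbours of [x] and [y]; then recolour [x] and [y] to [d x]. *)
Lemma reconf_cherry (g d : colouring) : proper_colouring e g -> proper_colouring e d ->
  g x = g y -> d x = d y -> reconf e g d.
Proof.
move=> pg pd gxy dxy.
pose ban v := if e x v || e y v then [set d x] else set0.
have [|| g1 [pg1 g1x g1y g1ban]] := @exists_cherry_colouring (g x) (d x) ban.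
- by move=> v; rewrite /ban; case: ifP; rewrite ?sub0set // sub1set !inE eqxx orbT.
- by move=> v; rewrite /ban; case: ifP; rewrite ?inE.
have g1nbr v : e x v || e y v -> g1 v != d x.
  by move=> xyv; move: (g1ban v (cherry_nbr_notin xyv)); rewrite /ban xyv inE.
pose g2 := recolour g1 x (d x).
have g2nbr w : e y w -> g2 w != d x.
  move=> eyw; rewrite /g2 recolour_off ?g1nbr ?eyw ?orbT //.
  by apply: contraTneq eyw => ->; rewrite e_sym; case/and4P: xyr.
have g1nbr_x w : e x w -> g1 w != d x by move=> exw; rewrite g1nbr ?exw.
have pg2 := proper_colouring_recolour pg1 g1nbr_x.
apply: reconf_trans (reconf_cherry_fixed pg pg1 gxy _ _) _; rewrite ?g1x ?g1y //.
apply: reconf_trans (reconf_recolour pg1 g1nbr_x) _.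
apply: reconf_trans (reconf_recolour pg2 g2nbr) _.
have xy : x != y by case/and4P: xyr.
have g3x : recolour g2 y (d x) x = d x by rewrite recolour_off // recolour_at.
have g3y : recolour g2 y (d x) y = d x by rewrite recolour_at.
apply: reconf_cherry_fixed (proper_colouring_recolour pg2 g2nbr) pd _ _ _;
  by rewrite ?g3x ?g3y -?dxy.
Qed.

(* Keep [c] off the neighbours of [y] and [g x] off those of [q]; then move [y] to [c]
   and [q] to [g x]. *)
Lemma reconf_cherry_shift q (g : colouring) : e y q -> ~~ e x q -> q != x ->
  proper_colouring e g -> g x = g y ->
  exists2 d : colouring, proper_colouring e d /\ d x = d q & reconf e g d.
Proof.
move=> eyq nxq qx pg gxy.
have [c] : exists c, c \notin [set g x].
  by apply: colour_notin; rewrite cards1; have := card_nbrs_cherry_root; lia.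
rewrite inE => ca.
pose ban v := (if e q v then [set g x] else set0) :|: (if e y v then [set c] else set0).
have [|| g1 [pg1 g1x g1y g1ban]] := @exists_cherry_colouring (g x) c ban.
- move=> v; rewrite subUset; apply/andP.
  by split; case: ifP; rewrite ?sub0set // sub1set !inE eqxx ?orbT.
- move=> v; rewrite /ban inE => /orP [].
    by case: ifP => _; rewrite ?inE // (negbTE ca).
  by case: ifP; rewrite ?orbT ?inE.
have g1nbr_y w : e y w -> g1 w != c.
  move=> eyw; have wF : w \notin F by apply: cherry_nbr_notin; rewrite eyw orbT.
  move: (g1ban w wF).
  by rewrite /ban eyw !inE; apply: contra => ->; rewrite orbT.
pose g2 := recolour g1 y c.
have g2nbr_q w : e q w -> g2 w != g x.
  move=> eqw; have [-> | wy] := eqVneq w y; first by rewrite /g2 recolour_at.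
  have wx : w != x by apply: contraNneq nxq => <-; rewrite e_sym.
  have wF : w \notin F by rewrite !inE negb_or wx wy.
  by rewrite /g2 recolour_off //; move: (g1ban w wF); rewrite /ban eqw !inE => /norP [].
have pg2 := proper_colouring_recolour pg1 g1nbr_y.
exists (recolour g2 q (g x)).
  split; first exact: proper_colouring_recolour pg2 g2nbr_q.
  have xy : x != y by case/and4P: xyr.
  by rewrite recolour_at recolour_off 1?eq_sym // /g2 recolour_off.
apply: reconf_trans (reconf_cherry_fixed pg pg1 gxy _ _) _; rewrite ?g1x ?g1y //.
apply: reconf_trans (reconf_recolour pg1 g1nbr_y) (reconf_recolour pg2 g2nbr_q).
Qed.

End Cherry.

Lemma proper_colouring_neq (c : colouring) u v : proper_colouring e c -> e u v -> c u != c v.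
Proof. by move=> /forallP /(_ u) /forallP /(_ v) /implyP. Qed.

Lemma cherry_rotate x y r s (c : colouring) : cherry x y r -> c x = c y ->
  s \in [set x; y] -> exists p, cherry s p r /\ c s = c p.
Proof.
move=> xyr cxy /set2P [] ->; first by exists y.
by exists x; split; [exact: cherry_sym | rewrite cxy].
Qed.

Lemma reconf_cherries_via x1 y1 r1 x2 y2 r2 (g d phi : colouring) :
  cherry x1 y1 r1 -> cherry x2 y2 r2 -> proper_colouring e g -> proper_colouring e d ->
  g x1 = g y1 -> d x2 = d y2 ->
  proper_on ([set x1; y1] :|: [set x2; y2]) phi -> phi x1 = phi y1 -> phi x2 = phi y2 ->
  reconf e g d.
Proof.
move=> c1 c2 pg pd gxy1 dxy2 pphi phixy1 phixy2.
have [c [pc cphi]] := exists_extension pphi.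
have cxy1 : c x1 = c y1 by rewrite !cphi // !inE eqxx ?orbT.
have cxy2 : c x2 = c y2 by rewrite !cphi // !inE eqxx ?orbT.
exact: reconf_trans (reconf_cherry c1 pg pc gxy1 cxy1) (reconf_cherry c2 pc pd cxy2 dxy2).
Qed.

Lemma reconf_cherries_shared s p q r1 r2 (g d : colouring) :
  cherry s p r1 -> cherry s q r2 -> proper_colouring e g -> proper_colouring e d ->
  g s = g p -> d s = d q -> reconf e g d.
Proof.
move=> c1 c2 pg pd gsp dsq.
have [pq | pq] := eqVneq p q.
  by rewrite pq in c1 gsp; exact (reconf_cherry c1 pg pd gsp dsq).
have nsq : ~~ e s q by case/and4P: c2.
have [epq | npq] := boolP (e p q).
  have qs : q != s by case/and4P: c2; rewrite eq_sym.
  have [d' [pd' d'sq] gd'] := reconf_cherry_shift c1 epq nsq qs pg gsp.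
  exact: reconf_trans gd' (reconf_cherry c2 pd' pd d'sq dsq).
have nsp : ~~ e s p by case/and4P: c1.
apply: (reconf_cherries_via c1 c2 pg pd gsp dsq (phi := [ffun=> g s])); rewrite ?ffunE //.
apply/proper_onP => u w /setUP [] /set2P [] -> /setUP [] /set2P [] ->;
  by rewrite ?e_irr // ?(negbTE nsp) ?(negbTE nsq) ?(negbTE npq) // e_sym
     ?(negbTE nsp) ?(negbTE nsq) ?(negbTE npq).
Qed.

Lemma reconf_cherries_disjoint x1 y1 r1 x2 y2 r2 (g d : colouring) :
  cherry x1 y1 r1 -> cherry x2 y2 r2 -> proper_colouring e g -> proper_colouring e d ->
  g x1 = g y1 -> d x2 = d y2 -> [disjoint [set x1; y1] & [set x2; y2]] -> reconf e g d.
Proof.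
move=> c1 c2 pg pd gxy1 dxy2 P12.
have [b] : exists b, b \notin [set g x1].
  by apply: colour_notin; rewrite cards1; have := card_nbrs_cherry_root c1; lia.
rewrite inE => bg.
pose phi : colouring := [ffun v => if v \in [set x1; y1] then g x1 else b].
have phi2 v : v \in [set x2; y2] -> phi v = b by move=> v2; rewrite ffunE (disjointFl P12 v2).
apply: (reconf_cherries_via c1 c2 pg pd gxy1 dxy2 (phi := phi)).
- apply/proper_onP => u w /setUP [u1 | u2] /setUP [w1 | w2].
  + by rewrite (negbTE (cherry_indep c1 u1 w1)).
  + by rewrite (phi2 w w2) /phi ffunE u1 eq_sym.
  + by rewrite (phi2 u u2) /phi ffunE w1.
  + by rewrite (negbTE (cherry_indep c2 u2 w2)).
- by rewrite /phi !ffunE !inE !eqxx ?orbT.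
- by rewrite !phi2 // !inE eqxx ?orbT.
Qed.

Lemma reconf_cherries x1 y1 r1 x2 y2 r2 (g d : colouring) :
  cherry x1 y1 r1 -> cherry x2 y2 r2 -> proper_colouring e g -> proper_colouring e d ->
  g x1 = g y1 -> d x2 = d y2 -> reconf e g d.
Proof.
move=> c1 c2 pg pd gxy1 dxy2.
have [/eqP | [s /setIP [s1 s2]]] := set_0Vmem ([set x1; y1] :&: [set x2; y2]).
  by rewrite setI_eq0; apply: reconf_cherries_disjoint c1 c2 pg pd gxy1 dxy2.
have [p [c1' gsp]] := cherry_rotate c1 gxy1 s1.
have [q [c2' dsq]] := cherry_rotate c2 dxy2 s2.
exact: reconf_cherries_shared c1' c2' pg pd gsp dsq.
Qed.

Lemma unfrozen_cherry (c : colouring) : proper_colouring e c -> unfrozen e c ->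
  exists x y r, cherry x y r /\ c x = c y.
Proof.
move=> pc /existsP [r /forallPn [a]]; rewrite negb_imply => /andP [ar /existsPn noa].
pose N := [set w | e r w].
have sub : c @: N \subset ~: [set c r; a].
  apply/subsetP => z /imsetP [w]; rewrite inE => erw ->; rewrite !inE negb_or.
  by rewrite eq_sym proper_colouring_neq //=; move: (noa w); rewrite erw.
have lt : #|c @: N| < #|N|.
  have := cardsC [set c r; a]; rewrite cards2 eq_sym ar card_ord.
  have cN : #|N| = D := e_reg r.
  by have := subset_leq_card sub; lia.
have /dinjectivePn [x xN [y /andP [yx yN] cxy]] : ~~ dinjectiveb c N.
  by apply: contraTN lt => /dinjectiveP /imset_injP /eqP ->; rewrite ltnn.
exists x, y, r; split => //; move: xN yN; rewrite !inE => erx ery.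
rewrite /cherry eq_sym yx erx ery /= andbT; apply/negP => exy.
by move: (proper_colouring_neq pc exy); rewrite cxy eqxx.
Qed.

End Recolouring.

Theorem mainTheorem10 (T : finType) (e : rel T) (D : nat)
    (alpha beta : {ffun T -> 'I_D.+1}) :
  simple_graph e -> k_connected e 3 -> regular e D ->
  proper_colouring e alpha -> proper_colouring e beta ->
  unfrozen e alpha -> unfrozen e beta ->
  reconf e alpha beta.
Proof.
move=> [e_sym e_irr] e_conn e_reg p_alpha p_beta u_alpha u_beta.
have [x1 [y1 [r1 [c1 alpha1]]]] := unfrozen_cherry e_reg p_alpha u_alpha.
have [x2 [y2 [r2 [c2 beta2]]]] := unfrozen_cherry e_reg p_beta u_beta.
exact (reconf_cherries e_sym e_irr e_reg e_conn c1 c2 p_alpha p_beta alpha1 beta2).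
Qed.
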